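(* Let $f(x)=a_nx^n+a_{n-1}x^{n-1}+\dots+a_1x+a_0\in\mathbb{Z}[x]$. Suppose that there exists a prime $p$ such that $p\nmid a_n$, $p\mid a_i$ for all $0\leq i\leq n-1$, $p^2\mid a_j$ for all $0\leq j\leq\lfloor n/2\rfloor$, and $p^3\nmid a_0$. Then: (1) if $n$ is odd, $f(x)$ is irreducible over $\mathbb{Z}$; (2) if $n$ is even, then either $f(x)$ is irreducible over $\mathbb{Z}$, or $f(x)$ is a product of exactly two irreducible polynomials in $\mathbb{Z}[x]$ of equal degree, each of which is Eisenstein with respect to $p$.
   Context: A nonconstant polynomial in $\mathbb{Z}[x]$ is called reducible over $\mathbb{Z}$ if it can be written as a product of two nonconstant polynomials in $\mathbb{Z}[x]$; otherwise it is irreducible over $\mathbb{Z}$. A polynomial $b_rx^r+\dots+b_1x+b_0\in\mathbb{Z}[x]$ of positive degree $r$ is Eisenstein with respect to a prime $p$ if $p\nmid b_r$, $p\mid b_i$ for all $0\leq i\leq r-1$, and $p^2\nmid b_0$. *)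

From HB Require Import structures.
From mathcomp Require Import all_boot all_order all_algebra.
Set Implicit Arguments. Unset Strict Implicit. Unset Printing Implicit Defensive.
Import Order.TTheory GRing.Theory Num.Theory.
Local Open Scope ring_scope.

(* Polynomials over Z are {poly int}; degree of g is (size g).-1. *)

Definition nonconstZ (g : {poly int}) : Prop := (1 < size g)%N.

Definition reducibleZ (g : {poly int}) : Prop :=
  exists h k : {poly int}, [/\ nonconstZ h, nonconstZ k & g = h * k].

Definition irreducibleZ (g : {poly int}) : Prop :=
  nonconstZ g /\ ~ reducibleZ g.

Definition eisensteinZ (p : nat) (g : {poly int}) : Prop :=
  [/\ (0 < (size g).-1)%N,
      ~ (p%:Z %| g`_((size g).-1))%Z,
      (forall i : nat, (i < (size g).-1)%N -> (p%:Z %| g`_i)%Z)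
    & ~ ((p ^ 2)%N%:Z %| g`_0)%Z].

From HB Require Import structures.
From mathcomp Require Import all_boot all_order all_algebra.
From mathcomp Require Import zify.
From Stdlib Require Import Classical.
Import Order.TTheory GRing.Theory Num.Theory.
Set Implicit Arguments. Unset Strict Implicit.
Local Open Scope ring_scope.

(* Modulo p, f is c X^n with c <> 0, so in any factorisation f = g h both
   factors are monomials modulo p (compare the first coefficients of g and h not
   divisible by p).  As p^3 does not divide f_0 = g_0 h_0, both g and h are
   Eisenstein.  If deg g = r < deg h, then r <= n/2 and f_r = g_r h_0 mod p^2,
   so p^2 divides h_0, a contradiction.  Hence both factors have degree n/2, and
   Eisenstein polynomials are irreducible. *)

Definition monomial_modp (p : nat) (g : {poly int}) : Prop :=
  ~ (p%:Z %| lead_coef g)%Z /\ forall i, (i < (size g).-1)%N -> (p%:Z %| g`_i)%Z.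

Lemma nonconstZ_neq0 (g : {poly int}) : nonconstZ g -> g != 0.
Proof. by rewrite /nonconstZ; apply: contraTneq => ->; rewrite size_poly0. Qed.

Lemma size_mul_pred (R : idomainType) (g h : {poly R}) : g != 0 -> h != 0 ->
  (size (g * h)).-1 = ((size g).-1 + (size h).-1)%N.
Proof.
move=> nz_g nz_h; rewrite size_mul //.
by move: nz_g nz_h; rewrite -!size_poly_gt0; move: (size g) (size h) => m n; lia.
Qed.

Lemma Euclid_dvdzM (p : nat) (a b : int) :
  prime p -> (p%:Z %| a * b)%Z = (p%:Z %| a)%Z || (p%:Z %| b)%Z.
Proof. by move=> p_pr; rewrite !dvdzE abszM Euclid_dvdM. Qed.

Section CoefficientsModp.

Variable p : nat.
Hypothesis p_prime : prime p.

Lemma coefM_first_nondvd (u v : {poly int}) (i j : nat) :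
  ~~ (p%:Z %| u`_i)%Z -> ~~ (p%:Z %| v`_j)%Z ->
  (forall k, (k < i)%N -> (p%:Z %| u`_k)%Z) ->
  (forall k, (k < j)%N -> (p%:Z %| v`_k)%Z) ->
  ~~ (p%:Z %| (u * v)`_(i + j))%Z.
Proof.
move=> ui vj u_low v_low.
have lt_i : (i < (i + j).+1)%N by rewrite ltnS leq_addr.
rewrite coefM (bigD1 (Ordinal lt_i)) //= addKn.
set rest := \sum_(k < _ | _) _.
have p_rest : (p%:Z %| rest)%Z.
  apply: rpred_sum => -[k lt_k] /= ne_ki.
  have [k_lt_i | i_lt_k | k_eq_i] := ltngtP k i.
  - by apply: dvdz_mulr; apply: u_low.
  - by apply: dvdz_mull; apply: v_low; lia.
  - by move: ne_ki; rewrite -(inj_eq val_inj) /= k_eq_i eqxx.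
by rewrite (rpredDr _ p_rest) Euclid_dvdzM // negb_or ui vj.
Qed.

Lemma monomial_modpMl (u v : {poly int}) :
  monomial_modp p (u * v) -> monomial_modp p u.
Proof.
move=> [lead_uv low_uv].
have u_neq0 : u != 0.
  by apply/eqP=> u0; apply: lead_uv; rewrite u0 mul0r lead_coef0 dvdz0.
have v_neq0 : v != 0.
  by apply/eqP=> v0; apply: lead_uv; rewrite v0 mulr0 lead_coef0 dvdz0.
move/negP: lead_uv; rewrite lead_coefM Euclid_dvdzM // negb_or => /andP[lead_u lead_v].
split; first exact/negP.
have ex_u : exists i, ~~ (p%:Z %| u`_i)%Z by exists (size u).-1.
have ex_v : exists j, ~~ (p%:Z %| v`_j)%Z by exists (size v).-1.
have [i0 u_i0 min_i0] := ex_minnP ex_u.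
have [j0 v_j0 min_j0] := ex_minnP ex_v.
have u_low k : (k < i0)%N -> (p%:Z %| u`_k)%Z.
  by move=> lt_k; apply/negPn/negP => /min_i0; rewrite leqNgt lt_k.
have v_low k : (k < j0)%N -> (p%:Z %| v`_k)%Z.
  by move=> lt_k; apply/negPn/negP => /min_j0; rewrite leqNgt lt_k.
have uv_i0j0 := coefM_first_nondvd u_i0 v_j0 u_low v_low.
have deg_le : ((size u).-1 + (size v).-1 <= i0 + j0)%N.
  by rewrite -size_mul_pred // leqNgt; apply: contraNN uv_i0j0 => /low_uv.
have le_i0 := min_i0 _ lead_u; have le_j0 := min_j0 _ lead_v.
suff -> : (size u).-1 = i0 by exact: u_low.
apply/eqP; rewrite eqn_leq le_i0 andbT -(leq_add2r j0).
by rewrite (leq_trans _ deg_le) // leq_add2l.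
Qed.

Lemma monomial_modpMr (u v : {poly int}) :
  monomial_modp p (u * v) -> monomial_modp p v.
Proof. by rewrite mulrC; apply: monomial_modpMl. Qed.

Lemma dvdz_sq_coefM_sub (g h : {poly int}) (r : nat) :
  (forall i, (i < r)%N -> (p%:Z %| g`_i)%Z) ->
  (forall j, (0 < j <= r)%N -> (p%:Z %| h`_j)%Z) ->
  ((p ^ 2)%N%:Z %| (g * h)`_r - g`_r * h`_0)%Z.
Proof.
move=> g_low h_low; rewrite coefM big_ord_recr /= subnn addrK.
apply: rpred_sum => -[i lt_i] _ /=.
rewrite expnS expn1 PoszM; apply: dvdz_mul; [exact: g_low | apply: h_low; lia].
Qed.

End CoefficientsModp.

Lemma eisenstein_irreducible (p : nat) (g : {poly int}) :
  prime p -> eisensteinZ p g -> irreducibleZ g.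
Proof.
move=> p_pr [deg_g lead_g low_g g0_ndvd]; split; first by rewrite /nonconstZ -ltn_predRL.
move=> [u [v [nc_u nc_v g_uv]]]; apply: g0_ndvd.
have g_mono : monomial_modp p (u * v) by rewrite -g_uv; split.
have [_ u_low] := monomial_modpMl p_pr g_mono.
have [_ v_low] := monomial_modpMr p_pr g_mono.
rewrite g_uv coef0M expnS expn1 PoszM.
by apply: dvdz_mul; [apply: u_low | apply: v_low]; rewrite ltn_predRL.
Qed.

Section Factorization.

Variables (p : nat) (f : {poly int}).
Hypothesis p_prime : prime p.
Hypothesis f_lead : ~ (p%:Z %| f`_((size f).-1))%Z.
Hypothesis f_low : forall i, (i < (size f).-1)%N -> (p%:Z %| f`_i)%Z.
Hypothesis f_half : forall j, (j <= ((size f).-1)./2)%N -> ((p ^ 2)%N%:Z %| f`_j)%Z.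
Hypothesis f0_ndvd : ~ ((p ^ 3)%N%:Z %| f`_0)%Z.

Lemma nonconstZ_f : nonconstZ f.
Proof.
rewrite /nonconstZ ltnNge; apply/negP => size_f; apply: f_lead.
have -> : (size f).-1 = 0%N by move: size_f; case: (size f) => [|[]].
by apply: dvdz_trans (f_half (leq0n _)); rewrite expnS PoszM dvdz_mulr.
Qed.

Lemma factor_eisenstein (g h : {poly int}) :
  f = g * h -> nonconstZ g -> nonconstZ h -> eisensteinZ p g.
Proof.
move=> f_gh nc_g nc_h.
have f_mono : monomial_modp p (g * h) by rewrite -f_gh; split.
have [lead_g g_low] := monomial_modpMl p_prime f_mono.
have [_ h_low] := monomial_modpMr p_prime f_mono.
rewrite /nonconstZ in nc_g nc_h.
split=> //; first by rewrite ltn_predRL.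
move=> g0_sq; apply: f0_ndvd; rewrite f_gh coef0M expnS PoszM mulrC.
by apply: dvdz_mul => //; apply: h_low; rewrite ltn_predRL.
Qed.

Lemma factor_size_eq (g h : {poly int}) :
  f = g * h -> nonconstZ g -> nonconstZ h -> size g = size h.
Proof.
wlog lt_gh : g h / (size g < size h)%N.
  move=> wlog_lt f_gh nc_g nc_h.
  have [lt_gh|lt_hg|//] := ltngtP (size g) (size h); first exact: wlog_lt.
  by apply/esym/wlog_lt; rewrite // mulrC.
move=> f_gh nc_g nc_h; exfalso.
have f_hg : f = h * g by rewrite mulrC.
have [_ lead_g g_low _] := factor_eisenstein f_gh nc_g nc_h.
have [_ _ h_low h0_ndvd] := factor_eisenstein f_hg nc_h nc_g.
have lt_deg : ((size g).-1 < (size h).-1)%N.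
  by rewrite -!subn1 ltn_sub2r // (ltn_trans nc_g lt_gh).
have deg_f : (size f).-1 = ((size g).-1 + (size h).-1)%N.
  by rewrite f_gh size_mul_pred ?nonconstZ_neq0.
have p2_fr : ((p ^ 2)%N%:Z %| f`_(size g).-1)%Z.
  apply: f_half; rewrite deg_f -{1}(doubleK (size g).-1) -addnn.
  by rewrite half_leq // leq_add2l ltnW.
have p2_grh0 : ((p ^ 2)%N%:Z %| g`_(size g).-1 * h`_0)%Z.
  rewrite -(rpredBl _ p2_fr) f_gh dvdz_sq_coefM_sub // => j /andP[_ j_le].
  exact/h_low/(leq_ltn_trans j_le).
have /dvdzP[k h0_eq] : (p%:Z %| h`_0)%Z.
  exact/h_low/(leq_ltn_trans (leq0n _) lt_deg).
move: p2_grh0; rewrite h0_eq expnS expn1 PoszM mulrA dvdz_mul2r; last first.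
  by rewrite eqz_nat -lt0n prime_gt0.
rewrite Euclid_dvdzM // => /orP[|p_k]; first exact: lead_g.
by apply: h0_ndvd; rewrite h0_eq expnS expn1 PoszM; apply: dvdz_mul.
Qed.

End Factorization.

Theorem theorem2p2 (f : {poly int}) (p : nat) :
  prime p ->
  ~ (p%:Z %| f`_((size f).-1))%Z ->
  (forall i : nat, (i < (size f).-1)%N -> (p%:Z %| f`_i)%Z) ->
  (forall j : nat, (j <= ((size f).-1)./2)%N -> ((p ^ 2)%N%:Z %| f`_j)%Z) ->
  ~ ((p ^ 3)%N%:Z %| f`_0)%Z ->
  (odd (size f).-1 -> irreducibleZ f) /\
  (~~ odd (size f).-1 ->
     irreducibleZ f \/
     exists g h : {poly int},
       [/\ f = g * h, irreducibleZ g /\ irreducibleZ h,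
           size g = size h & eisensteinZ p g /\ eisensteinZ p h]).
Proof.
move=> p_pr f_lead f_low f_half f0_ndvd.
have nc_f := nonconstZ_f f_lead f_half.
have eis := factor_eisenstein p_pr f_lead f_low f0_ndvd.
have size_eq := factor_size_eq p_pr f_lead f_low f_half f0_ndvd.
have even_deg g h : f = g * h -> nonconstZ g -> nonconstZ h -> ~~ odd (size f).-1.
  move=> f_gh nc_g nc_h.
  by rewrite f_gh size_mul_pred ?nonconstZ_neq0 // -(size_eq g h) // addnn odd_double.
split=> [odd_f | _].
  split=> // -[g [h [nc_g nc_h f_gh]]].
  by rewrite (negbTE (even_deg g h f_gh nc_g nc_h)) in odd_f.
have [[g [h [nc_g nc_h f_gh]]] | not_red] := classic (reducibleZ f); last by left.
have f_hg : f = h * g by rewrite mulrC.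
have eis_g := eis g h f_gh nc_g nc_h; have eis_h := eis h g f_hg nc_h nc_g.
right; exists g, h; split=> //; last exact: size_eq.
by split; apply: eisenstein_irreducible p_pr _.
Qed.
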